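(* Suppose $L=cW$ with $c\in\mathbb{C}\setminus\{0\}$ and $W\in\mathbb{C}^{p\times p}$ unitary. Let $\mathcal A\in\mathbb{C}_p^{I_1\times\cdots\times I_N}$. For each $n$ let $\mathcal A_{(n)}=\mathcal U_n*\Sigma_n*\mathcal V_n^H$ be the t-SVD of the mode-$n$ unfolding, let $R_n$ be the t-rank of $\mathcal A_{(n)}$, let $\sigma^{(n)}_1,\dots,\sigma^{(n)}_{R_n}$ be the Frobenius norms of the nonzero diagonal tubal scalars $\Sigma_n(i,i)$, and fix integers $1\le I_n'\le R_n$. Define $\widehat{\mathcal U}_1,\dots,\widehat{\mathcal U}_N$ recursively: $\widehat{\mathcal U}_n\in\mathbb{C}_p^{I_n\times I_n'}$ is formed by the first $I_n'$ columns of the left unitary factor of the t-SVD of the tubal matrix $\big(\mathcal A*_1\widehat{\mathcal U}_1^H\cdots*_{n-1}\widehat{\mathcal U}_{n-1}^H\big)_{(n)}$ (for $n=1$, of $\mathcal A_{(1)}$). Let $\widehat{\mathcal S}=\mathcal A*_1\widehat{\mathcal U}_1^H\cdots*_N\widehat{\mathcal U}_N^H$ and $\widehat{\mathcal A}=\widehat{\mathcal S}*_1\widehat{\mathcal U}_1\cdots*_N\widehat{\mathcal U}_N$. Then $$\|\mathcal A-\widehat{\mathcal A}\|\le\sqrt{\sum_{n=1}^N\sum_{i=I_n'+1}^{R_n}(\sigma^{(n)}_i)^2}\le\sqrt N\,\big\|\mathcal A-\mathcal S*_1\mathcal W_1\cdots*_N\mathcal W_N\big\|$$ for every $\mathcal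 S\in\mathbb{C}_p^{I_1'\times\cdots\times I_N'}$ and all $\mathcal W_n\in\mathbb{C}_p^{I_n\times I_n'}$ with $\mathcal W_n^H*\mathcal W_n=\mathcal I_{I_n'}$.
   Context: Fix an integer $p\ge1$ and an invertible linear map $L:\mathbb{C}^p\to\mathbb{C}^p$. A tubal scalar is an element of $\mathbb{C}_p:=\mathbb{C}^p$. The tensor-tensor product of tubal scalars is $\mathbf a*\mathbf b=L^{-1}(L(\mathbf a)\odot L(\mathbf b))$, where $\odot$ is the componentwise product. A tubal matrix $\mathcal A\in\mathbb{C}_p^{I\times J}$ is an $I\times J$ array of tubal scalars; its $k$-th frontal slice $\mathcal A^{(k)}$ has entries $\mathcal A(i,j)^{(k)}$, and $L(\mathcal A)$ is obtained by applying $L$ to every entry. $(\mathcal A*\mathcal B)(i,k)=\sum_j\mathcal A(i,j)*\mathcal B(j,k)$; equivalently $L(\mathcal A*\mathcal B)^{(k)}=L(\mathcal A)^{(k)}L(\mathcal B)^{(k)}$. The identity $\mathcal I_I$ has $L(\mathcal I_I)^{(k)}$ equal to the $I\times I$ identity matrix for all $k$. The Hermitian transpose is defined by $L(\mathcal A^H)^{(k)}=(L(\mathcal A)^{(k)})^H$; $\mathcal A\in\mathbb{C}_p^{I\times I}$ is unitary if $\mathcal A*\mathcal A^H=\mathcal A^H*\mathcal A=\mathcal I_I$. A t-SVD of $\mathcal A\in\mathbb{C}_p^{I\times J}$ is the factorization $\mathcal A=\mathcal U*\Sigma*\mathcal V^H$ obtained by taking, for each $k$, a matrix SVD $L(\mathcal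 A)^{(k)}=U_kS_kV_k^H$ (with $U_k,V_k$ unitary, $S_k$ rectangular diagonal with singular values in nonincreasing order) and defining $L(\mathcal U)^{(k)}=U_k$, $L(\Sigma)^{(k)}=S_k$, $L(\mathcal V)^{(k)}=V_k$; $\mathcal U$ is its left unitary factor. The t-rank is the number of nonzero tubal scalars $\Sigma(i,i)$. A tubal tensor $\mathcal A\in\mathbb{C}_p^{I_1\times\cdots\times I_N}$ is an $N$-way array of tubal scalars; its mode-$n$ unfolding $\mathcal A_{(n)}\in\mathbb{C}_p^{I_n\times\prod_{m\neq n}I_m}$ has $\mathcal A_{(n)}(i_n,j)=\mathcal A(i_1,\dots,i_N)$ with $j=1+\sum_{k\neq n}(i_k-1)\prod_{m<k,\,m\neq n}I_m$. The $n$-mode product is $(\mathcal A*_n\mathcal U)(i_1,\dots,i_{n-1},j,i_{n+1},\dots,i_N)=\sum_{i_n}\mathcal A(i_1,\dots,i_N)*\mathcal U(j,i_n)$; repeated products are evaluated left to right. $\|\cdot\|$ is the Frobenius norm (Euclidean norm of all complex entries of the underlying array). *)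

From mathcomp Require Import all_boot all_algebra.
From mathcomp Require Import complex.
From mathcomp Require Import reals.
Set Implicit Arguments. Unset Strict Implicit. Unset Printing Implicit Defensive.
Import GRing.Theory Num.Theory.
Local Open Scope ring_scope.

Section TubalDefs.
Variables (C : numClosedFieldType) (p : nat).

(* A tubal scalar is a column vector in C^p.  Its transform is L(a) = L *m a. *)
Definition tubal := 'cV[C]_p.

(* Tubal matrices and tubal tensors are represented by nat-indexed functions;
   their dimensions are passed explicitly wherever they matter. Modes are
   numbered 0 .. N-1, indices 0 .. I-1. *)
Definition tmat := nat -> nat -> tubal.
Definition ttensor := (nat -> nat) -> tubal.

Definition tprod (L : 'M[C]_p) (a b : tubal) : tubal :=
  invmx L *m \col_k ((L *m a) k 0 * (L *m b) k 0).

Definition therm (L : 'M[C]_p) (a : tubal) : tubal :=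
  invmx L *m map_mx Num.conj (L *m a).

Definition tH (L : 'M[C]_p) (U : tmat) : tmat := fun j i => therm L (U i j).

Definition tmul (L : 'M[C]_p) (K : nat) (A B : tmat) : tmat :=
  fun i j => \sum_(t < K) tprod L (A i t) (B t j).

Definition tid (L : 'M[C]_p) : tmat :=
  fun i j => invmx L *m (const_mx (if i == j then 1 else 0)).

Definition tslice (L : 'M[C]_p) (I J : nat) (A : tmat) (k : 'I_p) : 'M[C]_(I, J) :=
  \matrix_(i < I, j < J) (L *m A i j) k 0.

End TubalDefs.

Definition mxH (C : numClosedFieldType) (m n : nat) (M : 'M[C]_(m, n)) : 'M[C]_(n, m) :=
  (map_mx Num.conj M)^T.

Definition rdiag_sorted (C : numClosedFieldType) (m n : nat) (S : 'M[C]_(m, n)) : Prop :=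
  [/\ forall (i : 'I_m) (j : 'I_n), (i : nat) != j -> S i j = 0,
      forall (i : 'I_m) (j : 'I_n), (i : nat) = j -> 0 <= S i j
    & forall (i1 i2 : 'I_m) (j1 j2 : 'I_n), (i1 : nat) = j1 -> (i2 : nat) = j2 ->
        (i1 <= i2)%N -> S i2 j2 <= S i1 j1].

Definition is_tSVD (C : numClosedFieldType) (p : nat) (L : 'M[C]_p) (I J : nat)
  (A U S V : tmat C p) : Prop :=
  forall k : 'I_p,
    [/\ tslice L I I U k \is unitarymx,
        tslice L J J V k \is unitarymx,
        rdiag_sorted (tslice L I J S k)
      & tslice L I J A k = tslice L I I U k *m tslice L I J S k *m mxH (tslice L J J V k)].

Definition trank (C : numClosedFieldType) (p : nat) (I J : nat) (S : tmat C p) : nat :=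
  count (fun i => S i i != 0) (iota 0 (minn I J)).

Definition tnorm (C : numClosedFieldType) (p : nat) (a : tubal C p) : C :=
  sqrtC (\sum_(k < p) `|a k 0| ^+ 2).

Definition upd (i : nat -> nat) (n t : nat) : nat -> nat :=
  fun m => if m == n then t else i m.

Fixpoint tsum (C : numClosedFieldType) (n : nat) (d : nat -> nat)
  (F : (nat -> nat) -> C) (acc : nat -> nat) : C :=
  match n with
  | 0 => F acc
  | m.+1 => \sum_(t < d m) tsum m d F (upd acc m t)
  end.

Definition tnormT (C : numClosedFieldType) (p N : nat) (d : nat -> nat)
  (X : ttensor C p) : C :=
  sqrtC (tsum N d (fun i => \sum_(k < p) `|X i k 0| ^+ 2) (fun _ => 0%N)).

(* mode-n unfolding:  A_(n)(i_n, j) = A(i_1..i_N), with (0-based)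
   j = sum_{k <> n} i_k * prod_{m < k, m <> n} I_m *)
Definition colw (d : nat -> nat) (n k : nat) : nat := (\prod_(m < k | (m : nat) != n) d m)%N.
Definition ncols (N : nat) (d : nat -> nat) (n : nat) : nat := (\prod_(m < N | (m : nat) != n) d m)%N.
Definition decode (N : nat) (d : nat -> nat) (n r c : nat) : nat -> nat :=
  fun k => if (k < N)%N then (if k == n then r else (c %/ colw d n k) %% d k)%N else 0%N.
Definition unfold (C : numClosedFieldType) (p N : nat) (d : nat -> nat) (n : nat)
  (A : ttensor C p) : tmat C p :=
  fun r c => A (decode N d n r c).

Definition mprod (C : numClosedFieldType) (p : nat) (L : 'M[C]_p) (dn n : nat)
  (A : ttensor C p) (U : tmat C p) : ttensor C p :=
  fun i => \sum_(t < dn) tprod L (A (upd i n t)) (U (i n) t).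

Fixpoint hprod (C : numClosedFieldType) (p : nat) (L : 'M[C]_p) (d : nat -> nat)
  (A : ttensor C p) (U : nat -> tmat C p) (n : nat) : ttensor C p :=
  match n with
  | 0 => A
  | m.+1 => mprod L (d m) m (hprod L d A U m) (tH L (U m))
  end.

Fixpoint rprod (C : numClosedFieldType) (p : nat) (L : 'M[C]_p) (d' : nat -> nat)
  (S : ttensor C p) (W : nat -> tmat C p) (n : nat) : ttensor C p :=
  match n with
  | 0 => S
  | m.+1 => mprod L (d' m) m (rprod L d' S W m) (W m)
  end.

(* dimensions after the first n products by U_m^H (m < n) *)
Definition shp (d d' : nat -> nat) (n : nat) : nat -> nat :=
  fun m => if (m < n)%N then d' m else d m.

(* Since L = c W with W unitary, L scales Euclidean norms by |c|: every norm
   splits over the frontal slices of L(.), and on each slice the t-products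
   become ordinary matrix products.  On one slice, the error of the sequentially
   truncated HOSVD splits orthogonally into the mode-n residuals
   (I - U_n U_n^H) applied to A contracted with U_1^H, ..., U_(n-1)^H.  Each is
   at most the discarded singular energy of the n-th unfolding of A: U_n is
   optimal for the contracted tensor, while projecting with the leading singular
   vectors of A_(n) and contracting afterwards does no better, the contraction
   not increasing norms.  Conversely, by Eckart-Young the discarded energy of
   every unfolding is at most the error of any orthonormal Tucker model, and
   summing over the N modes gives the factor sqrt N. *)

From Stdlib Require Import FunctionalExtensionality.
From mathcomp Require Import all_boot all_order all_algebra.
From mathcomp Require Import complex.
From mathcomp Require Import reals.
From mathcomp Require Import ring.
Set Implicit Arguments. Unset Strict Implicit. Unset Printing Implicit Defensive.
Import Order.TTheory GRing.Theory Num.Theory.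
Local Open Scope ring_scope.

Section Frobenius.
Variable C : numClosedFieldType.

Lemma mxHM m n k (A : 'M[C]_(m, n)) (B : 'M[C]_(n, k)) :
  mxH (A *m B) = mxH B *m mxH A.
Proof. by rewrite /mxH map_mxM trmx_mul. Qed.

Lemma mxHK m n (A : 'M[C]_(m, n)) : mxH (mxH A) = A.
Proof. by apply/matrixP => i j; rewrite !mxE conjCK. Qed.

Lemma mxHD m n (A B : 'M[C]_(m, n)) : mxH (A + B) = mxH A + mxH B.
Proof. by apply/matrixP => i j; rewrite !mxE rmorphD. Qed.

Lemma mxH0 m n : mxH (0 : 'M[C]_(m, n)) = 0.
Proof. by apply/matrixP => i j; rewrite !mxE rmorph0. Qed.

Lemma mxH_pid_mx m n r : mxH (pid_mx r : 'M[C]_(m, n)) = pid_mx r.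
Proof. by rewrite /mxH map_pid_mx tr_pid_mx. Qed.

Lemma unitarymx_mxH n (U : 'M[C]_n) : U \is unitarymx ->
  U *m mxH U = 1%:M /\ mxH U *m U = 1%:M.
Proof.
move=> /unitarymxP hU.
have UUH : U *m mxH U = 1%:M.
  by rewrite -hU; congr (_ *m _); apply/matrixP => i j; rewrite !mxE.
by split => //; apply: mulmx1C.
Qed.

Lemma isometry_unitary_mul m r (U : 'M[C]_m) (Q : 'M[C]_(m, r)) :
  U \is unitarymx -> mxH Q *m Q = 1%:M -> mxH (U *m Q) *m (U *m Q) = 1%:M.
Proof.
move=> /unitarymx_mxH [_ UHU] hQ.
by rewrite mxHM mulmxA -(mulmxA _ _ U) UHU mulmx1.
Qed.

Lemma isometry_pid_mx m r : (r <= m)%N ->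
  mxH (pid_mx r : 'M[C]_(m, r)) *m pid_mx r = 1%:M.
Proof. by move=> hr; rewrite mxH_pid_mx pid_mx_id // pid_mx_1. Qed.

Definition frob2 m n (X : 'M[C]_(m, n)) : C := \tr (X *m mxH X).

Lemma frob2E m n (X : 'M[C]_(m, n)) : frob2 X = \sum_i \sum_j `|X i j| ^+ 2.
Proof.
rewrite /frob2 /mxtrace; apply: eq_bigr => i _; rewrite mxE; apply: eq_bigr => j _.
by rewrite !mxE normCK.
Qed.

Lemma frob2_ge0 m n (X : 'M[C]_(m, n)) : 0 <= frob2 X.
Proof.
by rewrite frob2E; apply: sumr_ge0 => i _; apply: sumr_ge0 => j _; exact: exprn_ge0.
Qed.

Lemma frob2_mxH m n (X : 'M[C]_(m, n)) : frob2 (mxH X) = frob2 X.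
Proof. by rewrite /frob2 mxHK mxtrace_mulC. Qed.

Lemma frob2_isoL m n k (Q : 'M[C]_(m, k)) (X : 'M[C]_(k, n)) :
  mxH Q *m Q = 1%:M -> frob2 (Q *m X) = frob2 X.
Proof.
move=> hQ; rewrite /frob2 mxHM mulmxA mxtrace_mulC !mulmxA hQ mul1mx.
by rewrite mxtrace_mulC.
Qed.

Lemma frob2_isoR m n k (V : 'M[C]_(k, n)) (X : 'M[C]_(m, n)) :
  mxH V *m V = 1%:M -> frob2 (X *m mxH V) = frob2 X.
Proof. by move=> hV; rewrite -frob2_mxH mxHM mxHK frob2_isoL ?frob2_mxH. Qed.

Lemma frob2D m n (X Y : 'M[C]_(m, n)) :
  frob2 (X + Y) = frob2 X + frob2 Y + (\tr (X *m mxH Y) + \tr (Y *m mxH X)).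
Proof. by rewrite /frob2 mxHD mulmxDl !mulmxDr !mxtraceD; ring. Qed.

Lemma frob2_pythagoras m n k (Q : 'M[C]_(m, k)) (X : 'M[C]_(m, n)) (G : 'M[C]_(k, n)) :
  mxH Q *m Q = 1%:M -> mxH Q *m X = 0 -> frob2 (X + Q *m G) = frob2 X + frob2 G.
Proof.
move=> hQ hX; rewrite frob2D frob2_isoL //.
rewrite mxHM mulmxA mxtrace_mulC mulmxA hX mul0mx mxtrace0 add0r.
have hXH : mxH X *m Q = 0 by rewrite -[Q]mxHK -mxHM hX mxH0.
by rewrite -mulmxA mxtrace_mulC -mulmxA hXH mulmx0 mxtrace0 addr0.
Qed.

Lemma isometry_residual_ortho m n k (Q : 'M[C]_(m, k)) (X : 'M[C]_(m, n)) :
  mxH Q *m Q = 1%:M -> mxH Q *m (X - Q *m mxH Q *m X) = 0.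
Proof. by move=> hQ; rewrite mulmxBr !mulmxA hQ mul1mx subrr. Qed.

Lemma frob2_project m n k (Q : 'M[C]_(m, k)) (X : 'M[C]_(m, n)) :
  mxH Q *m Q = 1%:M ->
  frob2 X = frob2 (X - Q *m mxH Q *m X) + frob2 (mxH Q *m X).
Proof.
move=> hQ; rewrite -(frob2_pythagoras _ hQ (isometry_residual_ortho X hQ)).
by rewrite mulmxA subrK.
Qed.

Lemma frob2_coisometry_le m n k (Q : 'M[C]_(m, k)) (X : 'M[C]_(m, n)) :
  mxH Q *m Q = 1%:M -> frob2 (mxH Q *m X) <= frob2 X.
Proof. by move=> hQ; rewrite (frob2_project X hQ) lerDr frob2_ge0. Qed.

End Frobenius.

Section Projections.
Variable C : numClosedFieldType.

Lemma projector_diag_unit m r (Q : 'M[C]_(m, r)) (i : 'I_m) :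
  mxH Q *m Q = 1%:M -> 0 <= (Q *m mxH Q) i i <= 1.
Proof.
move=> hQ; set P := Q *m mxH Q.
have P_ge0 : 0 <= P i i.
  rewrite mxE; apply: sumr_ge0 => j _; rewrite !mxE -normCK; exact: exprn_ge0.
have PPH : P *m mxH P = P by rewrite /P mxHM mxHK mulmxA -(mulmxA Q) hQ mulmx1.
have : P i i = \sum_j `|P i j| ^+ 2.
  by rewrite -{1}PPH mxE; apply: eq_bigr => j _; rewrite !mxE normCK.
rewrite (bigD1 i) //= ger0_norm // => Pii.
have P2_le : P i i ^+ 2 <= P i i.
  by rewrite [leRHS]Pii lerDl; apply: sumr_ge0 => j _; exact: exprn_ge0.
rewrite P_ge0 /=; have [->|nz] := eqVneq (P i i) 0; first exact: ler01.
have P_gt0 : 0 < P i i by rewrite lt0r nz P_ge0.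
by rewrite -(ler_pM2l P_gt0) mulr1 -expr2.
Qed.

Lemma projector_trace m r (Q : 'M[C]_(m, r)) :
  mxH Q *m Q = 1%:M -> \sum_i (Q *m mxH Q) i i = r%:R.
Proof. by move=> hQ; rewrite -/(\tr _) mxtrace_mulC hQ mxtrace1. Qed.

Lemma pid_projector_diag m r (i : 'I_m) :
  ((pid_mx r : 'M[C]_(m, r)) *m mxH (pid_mx r : 'M[C]_(m, r))) i i = (i < r)%N%:R.
Proof. by rewrite mxH_pid_mx mul_pid_mx !minnn mxE eqxx. Qed.

End Projections.

Section Rearrangement.
Variable C : numClosedFieldType.

Lemma sum_indicator_ltn m r : \sum_(i < m) ((i < r)%N%:R : C) = (minn r m)%:R.
Proof.
elim: m => [|m IH]; first by rewrite big_ord0 minn0.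
rewrite big_ord_recr /= IH; case: (ltnP m r) => h.
  by rewrite (minn_idPr h) -natrD addn1.
by rewrite addr0 (minn_idPl (leq_trans h (leqnSn m))).
Qed.

(* Weights [w] in [0, 1] of total mass [r] placed on a nonincreasing [s]
   remove at most the [r] largest terms. *)
Lemma tail_le_weighted_sum m r (s w : 'I_m -> C) :
  (r <= m)%N ->
  (forall i, 0 <= s i) -> (forall i j : 'I_m, (i <= j)%N -> s j <= s i) ->
  (forall i, 0 <= w i <= 1) -> \sum_i w i = r%:R ->
  \sum_(i : 'I_m | (r <= i)%N) s i <= \sum_i s i * (1 - w i).
Proof.
move=> hr s_ge0 s_dec hw hsum; rewrite -subr_ge0.
have -> : \sum_i s i * (1 - w i) - \sum_(i : 'I_m | (r <= i)%N) s i =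
          \sum_(i < m) s i * ((i < r)%N%:R - w i).
  rewrite [in RHS](bigID (fun i : 'I_m => (r <= i)%N)) /=.
  rewrite [\sum_i s i * (1 - w i)](bigID (fun i : 'I_m => (r <= i)%N)) /=.
  have -> : \sum_(i < m | (r <= i)%N) s i * ((i < r)%N%:R - w i) =
            \sum_(i < m | (r <= i)%N) s i * (1 - w i) - \sum_(i < m | (r <= i)%N) s i.
    by rewrite -sumrB; apply: eq_bigr => i hi; rewrite ltnNge hi /=; ring.
  have -> : \sum_(i < m | ~~ (r <= i)%N) s i * ((i < r)%N%:R - w i) =
            \sum_(i < m | ~~ (r <= i)%N) s i * (1 - w i).
    by apply: eq_bigr => i; rewrite ltnNge => /negbTE ->.
  ring.
have [->|hrm] := eqVneq r m.
  apply: sumr_ge0 => i _; rewrite ltn_ord mulr_ge0 // subr_ge0.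
  by have /andP[] := hw i.
have hrm' : (r < m)%N by rewrite ltn_neqAle hrm hr.
pose t := s (Ordinal hrm').
apply: (@le_trans _ _ (\sum_(i < m) t * ((i < r)%N%:R - w i))).
  by rewrite -mulr_sumr sumrB sum_indicator_ltn (minn_idPl hr) hsum subrr mulr0.
apply: ler_sum => i _; have /andP[w_ge0 w_le1] := hw i.
case: (ltnP i r) => hi /=.
  by rewrite ler_wpM2r ?subr_ge0 //; apply: s_dec; exact: ltnW.
by rewrite !sub0r !mulrN lerN2 ler_wpM2r //; exact: s_dec.
Qed.

End Rearrangement.

Section SingularValues.
Variables (C : numClosedFieldType) (m J : nat).

Definition sv2 (S : 'M[C]_(m, J)) (i : 'I_m) := (S *m mxH S) i i.

Definition sv2_tail (S : 'M[C]_(m, J)) r := \sum_(i : 'I_m | (r <= i)%N) sv2 S i.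

Variable S : 'M[C]_(m, J).
Hypothesis hS : rdiag_sorted S.

Lemma mulmx_mxH_diag : S *m mxH S = diag_mx (\row_i sv2 S i).
Proof.
apply/matrixP => a b; rewrite !mxE; have [<-|nab] := eqVneq a b.
  by rewrite mulr1n /sv2 mxE.
rewrite mulr0n; apply: big1 => j _; case: hS => hoff _ _; rewrite !mxE.
have [e|ne] := eqVneq (a : nat) (j : nat); last by rewrite (hoff a j) ?mul0r.
rewrite (hoff b j) ?rmorph0 ?mulr0 //.
by apply: contra nab => /eqP e2; apply/eqP/val_inj; rewrite /= e e2.
Qed.

Lemma sv2E i : sv2 S i = \sum_j `|S i j| ^+ 2.
Proof. by rewrite /sv2 mxE; apply: eq_bigr => j _; rewrite !mxE normCK. Qed.

Lemma sv2_ge0 i : 0 <= sv2 S i.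
Proof. by rewrite sv2E; apply: sumr_ge0 => j _; exact: exprn_ge0. Qed.

Lemma sv2_diag (i : 'I_m) (j : 'I_J) : (i : nat) = j -> sv2 S i = `|S i j| ^+ 2.
Proof.
move=> e; rewrite sv2E (bigD1 j) //= big1 ?addr0 // => j' nj.
case: hS => hoff _ _; rewrite hoff ?normr0 ?expr0n //.
by rewrite e; apply: contra nj => /eqP/val_inj ->.
Qed.

Lemma sv2_out (i : 'I_m) : (J <= i)%N -> sv2 S i = 0.
Proof.
move=> hi; rewrite sv2E big1 // => j _; case: hS => hoff _ _.
by rewrite hoff ?normr0 ?expr0n // neq_ltn (leq_trans (ltn_ord j) hi) orbT.
Qed.

Lemma sv2_nonincreasing (i1 i2 : 'I_m) : (i1 <= i2)%N -> sv2 S i2 <= sv2 S i1.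
Proof.
move=> h12; have [hJ|hJ] := leqP J i2; first by rewrite sv2_out // sv2_ge0.
have h1 : (i1 < J)%N by exact: leq_ltn_trans h12 hJ.
rewrite (sv2_diag (j := Ordinal hJ)) // (sv2_diag (j := Ordinal h1)) //.
case: hS => _ hpos hsort.
have ab := hsort i1 i2 (Ordinal h1) (Ordinal hJ) erefl erefl h12.
have := hpos i2 (Ordinal hJ) erefl; have := hpos i1 (Ordinal h1) erefl.
by move=> a0 b0; rewrite !ger0_norm //; exact: lerXn2r.
Qed.

Variables (Y : 'M[C]_(m, J)) (U : 'M[C]_m) (V : 'M[C]_J).
Hypotheses (hU : U \is unitarymx) (hV : V \is unitarymx) (hY : Y = U *m S *m mxH V).

Lemma frob2_svd : frob2 Y = \sum_i sv2 S i.
Proof.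
have [_ UHU] := unitarymx_mxH hU; have [_ VHV] := unitarymx_mxH hV.
by rewrite hY frob2_isoR // frob2_isoL // /frob2 mulmx_mxH_diag /mxtrace.
Qed.

(* In the singular basis the projector [Q Q^H] only contributes through its
   diagonal, which weighs the squared singular values. *)
Lemma frob2_residual r (Q : 'M[C]_(m, r)) : mxH Q *m Q = 1%:M ->
  frob2 (Y - Q *m mxH Q *m Y) =
  \sum_i sv2 S i * (1 - ((mxH U *m Q) *m mxH (mxH U *m Q)) i i).
Proof.
move=> hQ; have [_ VHV] := unitarymx_mxH hV.
have fQY : frob2 (mxH Q *m Y) =
    \sum_i sv2 S i * ((mxH U *m Q) *m mxH (mxH U *m Q)) i i.
  rewrite hY !mulmxA frob2_isoR // /frob2 mxHM -!mulmxA.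
  rewrite (mulmxA S) mulmx_mxH_diag mulmxA mxtrace_mulC -mulmxA.
  rewrite /mxtrace; apply: eq_bigr => i _; rewrite mul_diag_mx mxE [_ 0 i]mxE.
  by rewrite !mxHM !mxHK !mulmxA.
rewrite (_ : frob2 _ = frob2 Y - frob2 (mxH Q *m Y)); last first.
  by rewrite (frob2_project Y hQ) addrK.
by rewrite frob2_svd fQY -sumrB; apply: eq_bigr => i _; rewrite mulrBr mulr1.
Qed.

Lemma frob2_svd_truncation r : (r <= m)%N ->
  let P : 'M_(m, r) := U *m pid_mx r in frob2 (Y - P *m mxH P *m Y) = sv2_tail S r.
Proof.
move=> hr P; have [_ UHU] := unitarymx_mxH hU.
rewrite (frob2_residual (isometry_unitary_mul hU (@isometry_pid_mx C m r hr))).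
rewrite mulmxA UHU mul1mx /sv2_tail [RHS]big_mkcond /=.
apply: eq_bigr => i _; rewrite pid_projector_diag; case: (ltnP i r) => h /=.
  by rewrite subrr mulr0.
by rewrite subr0 mulr1.
Qed.

(* Eckart-Young: no factorization [Q M] with [r] orthonormal columns beats
   the truncated singular value decomposition. *)
Lemma sv2_tail_le_frob2 r (Q : 'M[C]_(m, r)) (M : 'M[C]_(r, J)) : (r <= m)%N ->
  mxH Q *m Q = 1%:M -> sv2_tail S r <= frob2 (Y - Q *m M).
Proof.
move=> hr hQ; have [UUH _] := unitarymx_mxH hU.
have hUHQ : mxH (mxH U *m Q) *m (mxH U *m Q) = 1%:M.
  by rewrite mxHM mxHK mulmxA -(mulmxA _ U) UUH mulmx1.
have -> : Y - Q *m M = (Y - Q *m mxH Q *m Y) + Q *m (mxH Q *m Y - M).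
  by rewrite mulmxBr !mulmxA addrA subrK.
rewrite frob2_pythagoras ?isometry_residual_ortho // frob2_residual //.
rewrite -[leLHS]addr0; apply: lerD; last exact: frob2_ge0.
apply: tail_le_weighted_sum => //.
- exact: sv2_ge0.
- exact: sv2_nonincreasing.
- by move=> i; apply: projector_diag_unit.
- exact: projector_trace.
Qed.

End SingularValues.

Lemma upd_at (i : nat -> nat) n t : upd i n t n = t.
Proof. by rewrite /upd eqxx. Qed.

Lemma upd_ne (i : nat -> nat) n t k : k != n -> upd i n t k = i k.
Proof. by rewrite /upd => /negbTE ->. Qed.

Lemma upd_comm (i : nat -> nat) m n a b : m != n ->
  upd (upd i m a) n b = upd (upd i n b) m a.
Proof.
move=> hmn; apply: functional_extensionality => k; rewrite /upd.
by case: (eqVneq k n) => [->|//]; rewrite eq_sym (negbTE hmn).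
Qed.

Lemma ncolsS M d n : ncols M.+1 d n = (ncols M d n * (if M == n then 1 else d M))%N.
Proof.
rewrite /ncols big_mkcond big_ord_recr /= -big_mkcond /=.
by case: (M == n); rewrite /= ?muln1.
Qed.

Lemma colw_mul_dvd_ncols M d n k : (k < M)%N -> k != n ->
  (colw d n k * d k %| ncols M d n)%N.
Proof.
elim: M => [//|M IH] hk hkn; rewrite ncolsS.
case: (ltngtP k M) => h.
- by apply: dvdn_mulr; apply: IH.
- by move: hk; rewrite ltnS leqNgt h.
- by subst k; rewrite (negbTE hkn).
Qed.

Lemma sum_ord_mul (C : nmodType) (a b : nat) (G : nat -> C) :
  \sum_(c < a * b) G c = \sum_(t < b) \sum_(c0 < a) G (c0 + a * t)%N.
Proof.
elim: b => [|b IH]; first by rewrite muln0 !big_ord0.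
rewrite mulnS addnC big_split_ord /= IH big_ord_recr /=; congr (_ + _).
by apply: eq_bigr => i _; rewrite addnC.
Qed.

Lemma eq_colw e e' n k : (forall j, j != n -> e j = e' j) -> colw e n k = colw e' n k.
Proof. by move=> h; apply: eq_bigr => j hj; rewrite h. Qed.

Lemma eq_ncols N e e' n : (forall j, j != n -> e j = e' j) -> ncols N e n = ncols N e' n.
Proof. exact: eq_colw. Qed.

Lemma eq_decode N e e' n r c : (forall j, j != n -> e j = e' j) ->
  decode N e n r c = decode N e' n r c.
Proof.
move=> h; apply: functional_extensionality => k; rewrite /decode.
case: (k < N)%N => //; case: (eqVneq k n) => // hk.
by rewrite (eq_colw _ h) h.
Qed.

Lemma decode_at N e n r c : (n < N)%N -> decode N e n r c n = r.
Proof. by move=> hn; rewrite /decode hn eqxx. Qed.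

Lemma upd_decode N e n r c t : (n < N)%N -> upd (decode N e n r c) n t = decode N e n t c.
Proof.
move=> hn; apply: functional_extensionality => k; rewrite /upd /decode.
by case: (eqVneq k n) => [->|]; rewrite ?hn ?eqxx.
Qed.

Section MultiIndexSums.
Variable C : numClosedFieldType.

Fixpoint tsum_but (M : nat) (d : nat -> nat) (n : nat) (F : (nat -> nat) -> C)
  (acc : nat -> nat) : C :=
  match M with
  | 0 => F acc
  | M'.+1 => if M' == n then tsum_but M' d n F acc
             else \sum_(t < d M') tsum_but M' d n F (upd acc M' t)
  end.

Definition decode_but (M : nat) (d : nat -> nat) (n : nat) (acc : nat -> nat) (c : nat) :=
  fun k => if (k < M)%N then (if k == n then acc k else (c %/ colw d n k) %% d k)%N
           else acc k.

Lemma sum_decode_but M d n F acc :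
  \sum_(c < ncols M d n) F (decode_but M d n acc c) = tsum_but M d n F acc.
Proof.
elim: M F acc => [|M IH] F acc; first by rewrite /ncols big_ord0 big_ord1.
rewrite ncolsS /=; case: (boolP (M == n)) => hMn.
  rewrite muln1 -IH; apply: eq_bigr => c _; congr F.
  apply: functional_extensionality => k; rewrite /decode_but ltnS leq_eqVlt.
  by case: (eqVneq k M) => [->|] /=; rewrite ?hMn ?ltnn.
rewrite (sum_ord_mul _ _ (fun c => F (decode_but M.+1 d n acc c))).
apply: eq_bigr => t _; rewrite -IH; apply: eq_bigr => c _.
have hc := ltn_ord c; move: (nat_of_ord c) hc => {}c hc; congr F.
apply: functional_extensionality => k; rewrite /decode_but ltnS leq_eqVlt.
have P0 : (0 < ncols M d n)%N by apply: leq_ltn_trans hc.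
case: (eqVneq k M) => [->|hkM] /=.
  rewrite ltnn (negbTE hMn) upd_at.
  by rewrite addnC mulnC divnMDl // divn_small // addn0 modn_small.
case: (boolP (k < M)%N) => hk; last by rewrite upd_ne.
case: (boolP (k == n)) => hkn; first by rewrite upd_ne.
have /dvdnP [q hq] := colw_mul_dvd_ncols d hk hkn.
have cw0 : (0 < colw d n k)%N.
  by move: P0; rewrite hq; case: (colw d n k); rewrite ?muln0.
rewrite hq (_ : (q * (colw d n k * d k) * t) = (q * t * d k) * colw d n k)%N; last by ring.
by rewrite addnC divnMDl // modnMDl.
Qed.

Lemma tsum_but_small M d n (F : (nat -> nat) -> C) acc :
  (M <= n)%N -> tsum_but M d n F acc = tsum M d F acc.
Proof.
elim: M acc => [//|M IH] acc hM /=.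
rewrite (_ : (M == n) = false); last by apply/negbTE; rewrite neq_ltn hM.
by apply: eq_bigr => t _; rewrite IH // ltnW.
Qed.

Lemma tsum_split M d n (F : (nat -> nat) -> C) acc : (n < M)%N ->
  tsum M d F acc = \sum_(r < d n) tsum_but M d n F (upd acc n r).
Proof.
elim: M acc => [//|M IH] acc hn /=.
case: (eqVneq M n) => [<-|hMn].
  by apply: eq_bigr => t _; rewrite tsum_but_small.
have hnM : (n < M)%N by move: hn; rewrite ltnS leq_eqVlt eq_sym (negbTE hMn).
under eq_bigr do rewrite IH //.
rewrite exchange_big /=; apply: eq_bigr => r _; apply: eq_bigr => t _.
by rewrite upd_comm.
Qed.

Lemma tsum_unfold N d n (F : (nat -> nat) -> C) : (n < N)%N ->
  tsum N d F (fun _ => 0%N) =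
  \sum_(r < d n) \sum_(c < ncols N d n) F (decode N d n r c).
Proof.
move=> hn; rewrite (tsum_split _ _ _ hn); apply: eq_bigr => r _.
rewrite -sum_decode_but; apply: eq_bigr => c _; congr F.
apply: functional_extensionality => k; rewrite /decode /decode_but /upd.
case: (boolP (k < N)%N) => hk; first by case: (k == n).
by case: (eqVneq k n) => // e; move: hk; rewrite e hn.
Qed.

Lemma eq_tsum M d (F G : (nat -> nat) -> C) acc :
  (forall i, F i = G i) -> tsum M d F acc = tsum M d G acc.
Proof.
move=> h; elim: M acc => [|M IH] acc /=; first exact: h.
by apply: eq_bigr => t _.
Qed.

Lemma eq_tsum_dims M e e' (F : (nat -> nat) -> C) acc :
  (forall k, e k = e' k) -> tsum M e F acc = tsum M e' F acc.
Proof.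
move=> h; elim: M acc => [//|M IH] acc /=; rewrite h.
by apply: eq_bigr => t _; rewrite IH.
Qed.

Lemma tsum_sumr M d (I : finType) (F : I -> (nat -> nat) -> C) acc :
  tsum M d (fun i => \sum_k F k i) acc = \sum_k tsum M d (F k) acc.
Proof.
elim: M acc => [//|M IH] acc /=.
by under eq_bigr do rewrite IH; rewrite exchange_big.
Qed.

Lemma tsum_mull M d (a : C) F acc :
  tsum M d (fun i => a * F i) acc = a * tsum M d F acc.
Proof.
elim: M acc => [//|M IH] acc /=.
by rewrite mulr_sumr; apply: eq_bigr => t _; rewrite IH.
Qed.

Lemma tsum_eq0 M e (F : (nat -> nat) -> C) acc : (forall i, F i = 0) -> tsum M e F acc = 0.
Proof.
move=> h; elim: M acc => [|M IH] acc /=; first exact: h.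
by rewrite big1 // => t _; rewrite IH.
Qed.

Lemma tsum_ge0 M e (F : (nat -> nat) -> C) acc :
  (forall i, 0 <= F i) -> 0 <= tsum M e F acc.
Proof.
move=> h; elim: M acc => [|M IH] acc /=; first exact: h.
by apply: sumr_ge0 => t _.
Qed.

End MultiIndexSums.

Section ScalarTensors.
Variable C : numClosedFieldType.
Notation tens := ((nat -> nat) -> C).

(* Scalar counterparts of [mprod], [tnormT] and [unfold]; a matrix is a
   function [nat -> nat -> C] read on the relevant index range. *)
Definition smprod (dn n : nat) (x : tens) (u : nat -> nat -> C) : tens :=
  fun i => \sum_(t < dn) x (upd i n t) * u (i n) t.

Definition sqnorm N (e : nat -> nat) (x : tens) : C :=
  tsum N e (fun i => `|x i| ^+ 2) (fun _ => 0%N).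

Definition unfoldmx N e n m J (x : tens) : 'M[C]_(m, J) :=
  \matrix_(r < m, c < J) x (decode N e n r c).

Definition fmx m k (u : nat -> nat -> C) : 'M[C]_(m, k) := \matrix_(i < m, j < k) u i j.

Definition fadj (u : nat -> nat -> C) : nat -> nat -> C := fun j i => (u i j)^*.

Lemma fmx_adj m k u : fmx k m (fadj u) = mxH (fmx m k u).
Proof. by apply/matrixP => i j; rewrite !mxE. Qed.

Definition mxfun m k (M : 'M[C]_(m, k)) : nat -> nat -> C :=
  fun i j => match insub i, insub j with Some i', Some j' => M i' j' | _, _ => 0 end.

Lemma fmx_mxfun m k (M : 'M[C]_(m, k)) : fmx m k (mxfun M) = M.
Proof.
apply/matrixP => i j; rewrite !mxE /mxfun.
rewrite (insubT (fun x => x < m)%N (ltn_ord i)) (insubT (fun x => x < k)%N (ltn_ord j)) /=.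
by congr (M _ _); apply: val_inj.
Qed.

Lemma sqnorm_ge0 N e x : 0 <= sqnorm N e x.
Proof. by apply: tsum_ge0 => i; exact: exprn_ge0. Qed.

Lemma sqnorm_unfoldmx N e n m J x : (n < N)%N -> m = e n -> J = ncols N e n ->
  sqnorm N e x = frob2 (unfoldmx N e n m J x).
Proof.
move=> hn -> ->; rewrite /sqnorm (tsum_unfold _ _ hn) frob2E.
by apply: eq_bigr => r _; apply: eq_bigr => c _; rewrite mxE.
Qed.

Lemma eq_unfoldmx N e e' n m J (x : tens) : (forall j, j != n -> e j = e' j) ->
  unfoldmx N e n m J x = unfoldmx N e' n m J x.
Proof. by move=> h; apply/matrixP => r c; rewrite !mxE (eq_decode _ _ _ h). Qed.

Lemma unfoldmx_smprod N e e' n m J k x u : (n < N)%N ->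
  (forall j, j != n -> e j = e' j) ->
  unfoldmx N e n m J (smprod k n x u) = fmx m k u *m unfoldmx N e' n k J x.
Proof.
move=> hn he; apply/matrixP => r c; rewrite !mxE /smprod.
apply: eq_bigr => t _; rewrite !mxE decode_at // upd_decode // mulrC.
by rewrite (eq_decode _ _ _ he).
Qed.

Lemma unfoldmx_smprodE N e n m J k x u : (n < N)%N ->
  unfoldmx N e n m J (smprod k n x u) = fmx m k u *m unfoldmx N e n k J x.
Proof. by move=> hn; apply: unfoldmx_smprod. Qed.

Lemma unfoldmxB N e n m J (x y : tens) :
  unfoldmx N e n m J (fun i => x i - y i) = unfoldmx N e n m J x - unfoldmx N e n m J y.
Proof. by apply/matrixP => r c; rewrite !mxE. Qed.

Lemma unfoldmxD N e n m J (x y : tens) :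
  unfoldmx N e n m J (fun i => x i + y i) = unfoldmx N e n m J x + unfoldmx N e n m J y.
Proof. by apply/matrixP => r c; rewrite !mxE. Qed.

Lemma smprodB dn n (x y : tens) u :
  smprod dn n (fun i => x i - y i) u = (fun i => smprod dn n x u i - smprod dn n y u i).
Proof.
apply: functional_extensionality => i; rewrite /smprod -sumrB.
by apply: eq_bigr => t _; rewrite mulrBl.
Qed.

Lemma smprodC dm m dn n (x : tens) A B : m != n ->
  smprod dm m (smprod dn n x B) A = smprod dn n (smprod dm m x A) B.
Proof.
move=> hmn; apply: functional_extensionality => i; rewrite /smprod.
under eq_bigr => t _ do rewrite mulr_suml.
rewrite exchange_big /=; apply: eq_bigr => u _; rewrite mulr_suml; apply: eq_bigr => t _.
rewrite upd_ne 1?eq_sym // upd_ne // upd_comm // -!mulrA; congr (_ * _).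
exact: mulrC.
Qed.

End ScalarTensors.

Section ScalarHOSVD.
Variable C : numClosedFieldType.
Notation tens := ((nat -> nat) -> C).

Fixpoint hprodS (d : nat -> nat) (a : tens) (u : nat -> nat -> nat -> C) n : tens :=
  match n with 0 => a | m.+1 => smprod (d m) m (hprodS d a u m) (fadj (u m)) end.

Fixpoint rprodS (d' : nat -> nat) (s : tens) (w : nat -> nat -> nat -> C) n : tens :=
  match n with 0 => s | m.+1 => smprod (d' m) m (rprodS d' s w m) (w m) end.

Fixpoint rprodS_but (d' : nat -> nat) (s : tens) (w : nat -> nat -> nat -> C) k n : tens :=
  match n with
  | 0 => s
  | m.+1 => if m == k then rprodS_but d' s w k m
            else smprod (d' m) m (rprodS_but d' s w k m) (w m)
  end.

Lemma rprodS_but_small d' s w k n : (n <= k)%N -> rprodS_but d' s w k n = rprodS d' s w n.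
Proof.
elim: n => [//|n IH] h /=.
by rewrite (_ : (n == k) = false) ?IH ?(ltnW h) //; apply/negbTE; rewrite neq_ltn h.
Qed.

Lemma rprodS_last d' s w k N : (k < N)%N ->
  rprodS d' s w N = smprod (d' k) k (rprodS_but d' s w k N) (w k).
Proof.
elim: N => [//|N IH] hk /=; case: (eqVneq N k) => [->|hNk].
  by rewrite rprodS_but_small.
have hk' : (k < N)%N by move: hk; rewrite ltnS leq_eqVlt eq_sym (negbTE hNk).
by rewrite IH // smprodC.
Qed.

Lemma shp_ne d d' n j : j != n -> shp d d' n.+1 j = shp d d' n j.
Proof. by move=> h; rewrite /shp ltnS leq_eqVlt (negbTE h). Qed.

Lemma shp_at d d' n : shp d d' n n = d n.
Proof. by rewrite /shp ltnn. Qed.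

Lemma shp_atS d d' n : shp d d' n.+1 n = d' n.
Proof. by rewrite /shp ltnSn. Qed.

Lemma shp0 d d' k : shp d d' 0 k = d k.
Proof. by rewrite /shp ltn0. Qed.

Lemma sv2_tail_le_sqnorm_error N d d' (a s : tens) (w : nat -> nat -> nat -> C) n
  (U : 'M[C]_(d n)) (S : 'M[C]_(d n, ncols N d n)) (V : 'M[C]_(ncols N d n)) :
  (n < N)%N -> (d' n <= d n)%N -> U \is unitarymx -> V \is unitarymx -> rdiag_sorted S ->
  unfoldmx N d n (d n) (ncols N d n) a = U *m S *m mxH V ->
  mxH (fmx (d n) (d' n) (w n)) *m fmx (d n) (d' n) (w n) = 1%:M ->
  sv2_tail S (d' n) <= sqnorm N d (fun x => a x - rprodS d' s w N x).
Proof.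
move=> hn hr hU hV hS hY hW.
rewrite (sqnorm_unfoldmx _ hn erefl erefl) unfoldmxB (rprodS_last _ _ _ hn).
by rewrite unfoldmx_smprodE // (sv2_tail_le_frob2 hS hU hV hY).
Qed.

Variables (N : nat) (d d' : nat -> nat) (a : tens) (uh : nat -> nat -> nat -> C).
Notation sh := (shp d d').
Notation y := (hprodS d a uh).

Fixpoint rprod_from k n (z : tens) : tens :=
  match k with 0 => z | k'.+1 => rprod_from k' n.+1 (smprod (d' n) n z (uh n)) end.

Lemma rprod_fromSr k n z :
  rprod_from k.+1 n z = smprod (d' (n + k)) (n + k) (rprod_from k n z) (uh (n + k)).
Proof.
elim: k n z => [|k IH] n z; first by rewrite addn0.
have -> : rprod_from k.+2 n z = rprod_from k.+1 n.+1 (smprod (d' n) n z (uh n)) by [].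
by rewrite IH addSnnS.
Qed.

Lemma rprodS_from s : rprodS d' s uh N = rprod_from N 0 s.
Proof. by elim: N => [//|M IH]; rewrite rprod_fromSr add0n -IH. Qed.

Lemma rprod_from_smprod k j z dn n B : (n < j)%N ->
  rprod_from k j (smprod dn n z B) = smprod dn n (rprod_from k j z) B.
Proof.
elim: k j z => [//|k IH] j z hj /=.
rewrite smprodC; last by rewrite neq_ltn hj orbT.
by rewrite IH // ltnW.
Qed.

Lemma hprodS_smprod j dn n z B : (j <= n)%N ->
  hprodS d (smprod dn n z B) uh j = smprod dn n (hprodS d z uh j) B.
Proof.
elim: j => [//|j IH] hj /=.
by rewrite IH ?(ltnW hj) // smprodC // neq_ltn hj.
Qed.

Lemma hprodSB j (x z : tens) :
  hprodS d (fun i => x i - z i) uh j = (fun i => hprodS d x uh j i - hprodS d z uh j i).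
Proof. by elim: j => [//|j IH] /=; rewrite IH smprodB. Qed.

Hypothesis uh_iso : forall n, (n < N)%N ->
  mxH (fmx (d n) (d' n) (uh n)) *m fmx (d n) (d' n) (uh n) = 1%:M.

Lemma sqnorm_hprodS_le j x : (j <= N)%N -> sqnorm N (sh j) (hprodS d x uh j) <= sqnorm N d x.
Proof.
elim: j => [|j IH] hj; first by rewrite /sqnorm (eq_tsum_dims _ _ _ (shp0 d d')).
apply: le_trans (IH (ltnW hj)).
rewrite /= (sqnorm_unfoldmx _ hj (esym (shp_atS d d' j)) erefl).
rewrite (unfoldmx_smprod _ _ _ _ _ hj (@shp_ne d d' j)) fmx_adj.
rewrite (sqnorm_unfoldmx _ hj (esym (shp_at d d' j)) (eq_ncols _ (@shp_ne d d' j))).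
exact: frob2_coisometry_le (uh_iso hj).
Qed.

Definition mode_residual n : tens := fun i => y n i - smprod (d' n) n (y n.+1) (uh n) i.

Lemma unfoldmx_mode_residual n : (n < N)%N ->
  let Z := unfoldmx N (sh n) n (d n) (ncols N (sh n) n) (y n) in
  let Q := fmx (d n) (d' n) (uh n) in
  unfoldmx N (sh n) n (d n) (ncols N (sh n) n) (mode_residual n) = Z - Q *m mxH Q *m Z.
Proof.
move=> hn Z Q; rewrite /mode_residual unfoldmxB.
by rewrite unfoldmx_smprodE // [y n.+1]/= unfoldmx_smprodE // fmx_adj mulmxA.
Qed.

Variable Sg : forall n, 'M[C]_(d n, ncols N d n).

Hypothesis svd_a : forall n, (n < N)%N ->
  exists (U : 'M[C]_(d n)) (V : 'M[C]_(ncols N d n)),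
  [/\ U \is unitarymx, V \is unitarymx, rdiag_sorted (Sg n) &
      unfoldmx N d n (d n) (ncols N d n) a = U *m Sg n *m mxH V].
Hypothesis svd_y : forall n, (n < N)%N ->
  exists (U : 'M[C]_(d n)) (S : 'M[C]_(d n, ncols N (sh n) n)) (V : 'M[C]_(ncols N (sh n) n)),
  [/\ U \is unitarymx, V \is unitarymx, rdiag_sorted S,
      unfoldmx N (sh n) n (d n) (ncols N (sh n) n) (y n) = U *m S *m mxH V &
      fmx (d n) (d' n) (uh n) = U *m pid_mx (d' n)].
Hypothesis d'_le : forall n, (n < N)%N -> (d' n <= d n)%N.

(* [uh n] is optimal for [y n]; compare it with the leading left singular
   vectors [P] of the unfolding of [a]: projecting [y n] with [P] is the same
   as projecting [a] with [P] and then contracting with the adjoints of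
   [uh 0 .. uh (n-1)], which does not increase the norm. *)
Lemma sqnorm_mode_residual_le n : (n < N)%N ->
  sqnorm N (sh n) (mode_residual n) <= sv2_tail (Sg n) (d' n).
Proof.
move=> hn; have [U' [S' [V' [hU' hV' hS' hZ huh]]]] := svd_y hn.
have [U [V [hU hV hS hY]]] := svd_a hn; have hr := d'_le hn.
rewrite (sqnorm_unfoldmx _ hn (esym (shp_at d d' n)) erefl) unfoldmx_mode_residual // huh.
rewrite (frob2_svd_truncation hS' hU' hV' hZ hr).
pose Z := unfoldmx N (sh n) n (d n) (ncols N (sh n) n) (y n).
pose P := U *m (pid_mx (d' n) : 'M_(d n, d' n)).
have hP : mxH P *m P = 1%:M := isometry_unitary_mul hU (isometry_pid_mx C hr).
apply: le_trans (sv2_tail_le_frob2 hS' hU' hV' hZ (mxH P *m Z) hr hP) _.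
have eP : fmx (d n) (d' n) (mxfun P) = P by rewrite fmx_mxfun.
pose del : tens := fun i => a i - smprod (d' n) n (smprod (d n) n a (fadj (mxfun P))) (mxfun P) i.
have -> : Z - P *m (mxH P *m Z) = unfoldmx N (sh n) n (d n) (ncols N (sh n) n) (hprodS d del uh n).
  by rewrite /del hprodSB !hprodS_smprod // unfoldmxB !unfoldmx_smprodE // fmx_adj eP.
rewrite -(sqnorm_unfoldmx _ hn (esym (shp_at d d' n)) erefl).
apply: le_trans (sqnorm_hprodS_le _ (ltnW hn)) _.
rewrite (sqnorm_unfoldmx _ hn erefl erefl) /del unfoldmxB !unfoldmx_smprodE // fmx_adj eP.
by rewrite mulmxA (frob2_svd_truncation hS hU hV hY hr).
Qed.

Definition suffix_error n : tens := fun i => y n i - rprod_from (N - n) n (y N) i.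

Lemma suffix_errorE n : (n < N)%N ->
  suffix_error n = (fun i => mode_residual n i + smprod (d' n) n (suffix_error n.+1) (uh n) i).
Proof.
move=> hn; apply: functional_extensionality => i.
rewrite /suffix_error /mode_residual smprodB -(subnSK hn) /=.
by rewrite rprod_from_smprod // addrA subrK.
Qed.

(* The residual of mode [n] is orthogonal to the range of [uh n], in which
   the error of the later modes lives: Pythagoras, then induction. *)
Lemma sqnorm_suffix_error_le k n : (n + k = N)%N ->
  sqnorm N (sh n) (suffix_error n) <= \sum_(n <= m < N) sv2_tail (Sg m) (d' m).
Proof.
elim: k n => [|k IH] n hk.
  rewrite addn0 in hk; subst n; rewrite big_geq // /sqnorm tsum_eq0 // => i.
  by rewrite /suffix_error subnn /= subrr normr0 expr0n.
have hn : (n < N)%N by rewrite -hk -addSnnS leq_addr.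
rewrite (big_ltn hn) suffix_errorE // (sqnorm_unfoldmx _ hn (esym (shp_at d d' n)) erefl).
rewrite unfoldmxD unfoldmx_smprodE // unfoldmx_mode_residual //.
rewrite frob2_pythagoras ?isometry_residual_ortho ?uh_iso //.
rewrite -unfoldmx_mode_residual // -(sqnorm_unfoldmx _ hn (esym (shp_at d d' n)) erefl).
apply: lerD; first exact: sqnorm_mode_residual_le.
rewrite -(eq_unfoldmx _ _ _ _ (@shp_ne d d' n)).
rewrite -(sqnorm_unfoldmx _ hn (esym (shp_atS d d' n)) (esym (eq_ncols _ (@shp_ne d d' n)))).
by apply: IH; rewrite -hk addSnnS.
Qed.

Lemma sqnorm_sthosvd_error_le :
  sqnorm N d (fun i => a i - rprodS d' (y N) uh N i) <= \sum_(n < N) sv2_tail (Sg n) (d' n).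
Proof.
have := sqnorm_suffix_error_le (n := 0) (k := N) (add0n N).
rewrite /sqnorm (eq_tsum_dims _ _ _ (shp0 d d')) big_mkord /suffix_error subn0 /=.
by rewrite rprodS_from.
Qed.

End ScalarHOSVD.

Section FrontalSlices.
Variables (C : numClosedFieldType) (p : nat) (L : 'M[C]_p).
Hypothesis L_unit : L \in unitmx.

Lemma L_tprod (a b : tubal C p) k : (L *m tprod L a b) k 0 = (L *m a) k 0 * (L *m b) k 0.
Proof. by rewrite /tprod mulKVmx // mxE. Qed.

Lemma L_therm (a : tubal C p) k : (L *m therm L a) k 0 = ((L *m a) k 0)^*.
Proof. by rewrite /therm mulKVmx // mxE. Qed.

Lemma L_tid i j k : (L *m tid L i j) k 0 = (i == j)%:R.
Proof. by rewrite /tid mulKVmx // mxE; case: (i == j). Qed.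

Lemma L_sum (I : finType) (f : I -> tubal C p) k :
  (L *m \sum_t f t) k 0 = \sum_t (L *m f t) k 0.
Proof. by rewrite mulmx_sumr summxE. Qed.

Definition slice k (X : ttensor C p) : (nat -> nat) -> C := fun i => (L *m X i) k 0.
Definition slicem k (U : tmat C p) : nat -> nat -> C := fun i j => (L *m U i j) k 0.

Lemma sliceB k (X Y : ttensor C p) :
  slice k (fun x => X x - Y x) = (fun i => slice k X i - slice k Y i).
Proof. by apply: functional_extensionality => i; rewrite /slice mulmxBr !mxE. Qed.

Lemma slice_mprod k dn n X U : slice k (mprod L dn n X U) = smprod dn n (slice k X) (slicem k U).
Proof.
apply: functional_extensionality => i; rewrite /slice /mprod L_sum.
by apply: eq_bigr => t _; rewrite L_tprod.
Qed.

Lemma slicem_tH k U : slicem k (tH L U) = fadj (slicem k U).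
Proof.
apply: functional_extensionality => j; apply: functional_extensionality => i.
by rewrite /slicem /tH L_therm.
Qed.

Lemma slice_hprod k d A U n :
  slice k (hprod L d A U n) = hprodS d (slice k A) (fun m => slicem k (U m)) n.
Proof. by elim: n => [//|n IH] /=; rewrite slice_mprod IH slicem_tH. Qed.

Lemma slice_rprod k d' S W n :
  slice k (rprod L d' S W n) = rprodS d' (slice k S) (fun m => slicem k (W m)) n.
Proof. by elim: n => [//|n IH] /=; rewrite slice_mprod IH. Qed.

Lemma tsliceE I J (A : tmat C p) k (i : 'I_I) (j : 'I_J) :
  tslice L I J A k i j = (L *m A i j) k 0.
Proof. exact: mxE. Qed.

Lemma tslice_unfold I J N e n X k : tslice L I J (unfold N e n X) k = unfoldmx N e n I J (slice k X).
Proof. by apply/matrixP => i j; rewrite !mxE. Qed.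

Lemma slice_svd I N e n X U S V k :
  is_tSVD L I (ncols N e n) (unfold N e n X) U S V ->
  [/\ tslice L I I U k \is unitarymx,
      tslice L (ncols N e n) (ncols N e n) V k \is unitarymx,
      rdiag_sorted (tslice L I (ncols N e n) S k) &
      unfoldmx N e n I (ncols N e n) (slice k X) =
        tslice L I I U k *m tslice L I (ncols N e n) S k *m
        mxH (tslice L (ncols N e n) (ncols N e n) V k)].
Proof. by move=> /(_ k) [hU hV hS hX]; rewrite -tslice_unfold. Qed.

Lemma isometry_slicem m r (W : tmat C p) k :
  (forall i j, (i < r)%N -> (j < r)%N -> tmul L m (tH L W) W i j = tid L i j) ->
  mxH (fmx m r (slicem k W)) *m fmx m r (slicem k W) = 1%:M.
Proof.
move=> hW; apply/matrixP => i j; rewrite !mxE.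
move: (hW i j (ltn_ord i) (ltn_ord j)) => /(congr1 (fun v => (L *m v) k 0)).
rewrite L_tid /tmul L_sum => <-; apply: eq_bigr => t _.
by rewrite L_tprod /tH L_therm /mxH /slicem !mxE.
Qed.

Lemma fmx_slicem_pid m r (U : 'M[C]_m) (W : tmat C p) k : (r <= m)%N ->
  (forall (i : 'I_m) (j : nat) (hj : (j < m)%N), (j < r)%N ->
     slicem k W i j = U i (Ordinal hj)) ->
  fmx m r (slicem k W) = U *m pid_mx r.
Proof.
move=> hr hW; apply/matrixP => i j; rewrite !mxE.
have hj : (j < m)%N := leq_trans (ltn_ord j) hr.
rewrite (bigD1 (Ordinal hj)) //= big1 ?addr0.
  by rewrite !mxE /= eqxx ltn_ord mulr1 (hW i j hj (ltn_ord j)).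
move=> l /negP hl; rewrite !mxE; case: (eqVneq (l : nat) j) => [e|]; last by rewrite mulr0.
by exfalso; apply: hl; apply/eqP/val_inj.
Qed.

Lemma L_mul_eq0 (v : 'cV[C]_p) : L *m v = 0 -> v = 0.
Proof. by move=> h; rewrite -(mulKmx L_unit v) h mulmx0. Qed.

Lemma trank_le_minn I J (Sg : tmat C p) : (trank I J Sg <= minn I J)%N.
Proof. by rewrite /trank (leq_trans (count_size _ _)) // size_iota. Qed.

Section TRank.
Variables (I J : nat) (Sg : tmat C p).
Hypothesis hS : forall k, rdiag_sorted (tslice L I J Sg k).

(* Some frontal slice sees a nonzero [Sg i i]; sortedness in that slice
   propagates it to every earlier diagonal entry. *)
Lemma tdiag_neq0_prefix i j :
  (j <= i)%N -> (i < minn I J)%N -> Sg i i != 0 -> Sg j j != 0.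
Proof.
move=> hji; rewrite leq_min => /andP[hiI hiJ] hne.
have hjI : (j < I)%N := leq_ltn_trans hji hiI.
have hjJ : (j < J)%N := leq_ltn_trans hji hiJ.
have /existsP [k hk] : [exists k, (L *m Sg i i) k 0 != 0].
  apply: contraR hne; rewrite negb_exists => /forallP h.
  apply/eqP/L_mul_eq0/matrixP => k l; rewrite ord1 [RHS]mxE.
  by move: (h k); rewrite negbK => /eqP.
case: (hS k) => _ hpos hsort.
have := hsort (Ordinal hjI) (Ordinal hiI) (Ordinal hjJ) (Ordinal hiJ) erefl erefl hji.
have := hpos (Ordinal hiI) (Ordinal hiJ) erefl; rewrite !tsliceE /= => h0 hij.
apply: contra hk => /eqP Sj0; move: hij; rewrite Sj0 mulmx0 [leRHS]mxE => hi0.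
by rewrite eq_le hi0 h0.
Qed.

Lemma tdiag_eq0_trank i :
  (trank I J Sg <= i)%N -> (i < minn I J)%N -> Sg i i = 0.
Proof.
move=> hR hi; apply/eqP; apply: contraTT hR => hne; rewrite -ltnNge.
rewrite /trank -(subnKC hi) iotaD count_cat (leq_trans _ (leq_addr _ _)) //.
rewrite (eq_in_count (a2 := predT)) ?count_predT ?size_iota // => j.
by rewrite mem_iota add0n ltnS => /andP[_ hj]; exact: tdiag_neq0_prefix hj hi hne.
Qed.

End TRank.
End FrontalSlices.

Section ScaledUnitaryTransform.
Variables (C : numClosedFieldType) (p : nat) (L W : 'M[C]_p) (c : C).
Hypotheses (hc : c != 0) (hW : W \is unitarymx) (hL : L = c *: W).

Lemma scaled_unitary_unit : L \in unitmx.
Proof.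
have [WWH _] := unitarymx_mxH hW.
have h : L *m (c^-1 *: mxH W) = 1%:M.
  by rewrite hL -scalemxAr -scalemxAl WWH scalerA mulVf // scale1r.
by have [] := mulmx1_unit h.
Qed.

Lemma sqnorm_col_scaled (v : 'cV[C]_p) :
  \sum_k `|v k 0| ^+ 2 = `|c| ^- 2 * \sum_k `|(L *m v) k 0| ^+ 2.
Proof.
have [_ WHW] := unitarymx_mxH hW.
have sq_col (u : 'cV[C]_p) : \sum_k `|u k 0| ^+ 2 = (mxH u *m u) 0 0.
  by rewrite mxE; apply: eq_bigr => k _; rewrite !mxE normCK mulrC.
have LHL : mxH L *m L = (`|c| ^+ 2) *: 1%:M.
  rewrite hL (_ : mxH (c *: W) = c^* *: mxH W); last first.
    by apply/matrixP => i j; rewrite !mxE rmorphM.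
  by rewrite -scalemxAl -scalemxAr WHW scalerA normCK mulrC.
rewrite !sq_col mxHM mulmxA -(mulmxA _ _ L) LHL -scalemxAr mulmx1 -scalemxAl mxE.
rewrite [X in _ * X]mxE mulrA mulVf ?mul1r ?mxE //.
by rewrite expf_neq0 // normr_eq0.
Qed.

Lemma tnormT_slices N d (X : ttensor C p) :
  tnormT N d X = sqrtC (`|c| ^- 2 * \sum_k sqnorm N d (slice L k X)).
Proof.
rewrite /tnormT /sqnorm (eq_tsum _ _ _ (fun i => sqnorm_col_scaled (X i))).
by rewrite tsum_mull tsum_sumr.
Qed.

Lemma sum_tnorm_tail I J (Sg : tmat C p) r :
  (forall k, rdiag_sorted (tslice L I J Sg k)) -> (r <= trank I J Sg)%N ->
  \sum_(r <= i < trank I J Sg) tnorm (Sg i i) ^+ 2 =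
  `|c| ^- 2 * \sum_k sv2_tail (tslice L I J Sg k) r.
Proof.
move=> hS hr; have hLu := scaled_unitary_unit.
under eq_bigr do rewrite sqrtCK sqnorm_col_scaled.
rewrite -mulr_sumr exchange_big /=; congr (_ * _); apply: eq_bigr => k _.
pose h i := if (i < J)%N then `|(L *m Sg i i) k 0| ^+ 2 else 0.
rewrite /sv2_tail (eq_bigr (fun i : 'I_I => h i)); last first.
  move=> i _; rewrite /h; case: (ltnP i J) => hiJ.
    by rewrite (sv2_diag (hS k) (j := Ordinal hiJ)) // tsliceE.
  by rewrite (sv2_out (hS k)).
have hRI : (trank I J Sg <= I)%N := leq_trans (trank_le_minn I J Sg) (geq_minl I J).
have hRJ : (trank I J Sg <= J)%N := leq_trans (trank_le_minn I J Sg) (geq_minr I J).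
rewrite -(big_geq_mkord r I xpredT h) (big_cat_nat hr hRI) /=.
rewrite [X in _ = _ + X]big_nat_cond [X in _ = _ + X]big1 ?addr0; last first.
  move=> i /andP[/andP[h1 h2] _]; rewrite /h; case: (ltnP i J) => hiJ //.
  rewrite (tdiag_eq0_trank hLu hS h1) ?mulmx0 ?mxE ?normr0 ?expr0n //.
  by rewrite leq_min h2 hiJ.
rewrite big_nat_cond [RHS]big_nat_cond; apply: eq_bigr => i /andP[/andP[_ h2] _].
by rewrite /h (leq_trans h2 hRJ).
Qed.

End ScaledUnitaryTransform.

Section TubalHOSVD.
Variables (C : numClosedFieldType) (p : nat) (L W : 'M[C]_p) (c : C).
Hypotheses (hc : c != 0) (hW : W \is unitarymx) (hL : L = c *: W).
Variables (N : nat) (d d' : nat -> nat) (A : ttensor C p) (Sig : nat -> tmat C p).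
Hypothesis hSig : forall n, (n < N)%N -> exists U V,
  is_tSVD L (d n) (ncols N d n) (unfold N d n A) U (Sig n) V.
Hypothesis hd' : forall n, (n < N)%N -> (1 <= d' n <= trank (d n) (ncols N d n) (Sig n))%N.

Let L_unit := scaled_unitary_unit hc hW hL.
Definition unfolding_slice k n := tslice L (d n) (ncols N d n) (Sig n) k.
Definition unfolding_tail k n := sv2_tail (unfolding_slice k n) (d' n).

Lemma d'_le_d n : (n < N)%N -> (d' n <= d n)%N.
Proof.
move=> hn; have /andP[_ h] := hd' hn.
exact: leq_trans h (leq_trans (trank_le_minn _ _ _) (geq_minl _ _)).
Qed.

Lemma svd_slice_unfold k n : (n < N)%N ->
  exists (U : 'M[C]_(d n)) (V : 'M[C]_(ncols N d n)),
  [/\ U \is unitarymx, V \is unitarymx, rdiag_sorted (unfolding_slice k n) &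
      unfoldmx N d n (d n) (ncols N d n) (slice L k A) = U *m unfolding_slice k n *m mxH V].
Proof.
move=> hn; have [U [V /(slice_svd k) [hU hV hS hA]]] := hSig hn.
by exists (tslice L (d n) (d n) U k), (tslice L (ncols N d n) (ncols N d n) V k).
Qed.

Lemma sum_tnorm_tails :
  \sum_(n < N) \sum_(d' n <= i < trank (d n) (ncols N d n) (Sig n)) tnorm (Sig n i i) ^+ 2 =
  `|c| ^- 2 * \sum_k \sum_(n < N) unfolding_tail k n.
Proof.
rewrite exchange_big mulr_sumr; apply: eq_bigr => n _.
have [U [V hsvd]] := hSig (ltn_ord n).
have /andP[_ hr] := hd' (ltn_ord n).
by rewrite (sum_tnorm_tail hc hW hL _ hr) // => k; have [] := hsvd k.
Qed.

Lemma sum_tails_ge0 : 0 <= \sum_k \sum_(n < N) unfolding_tail k n.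
Proof. by do 3!(apply: sumr_ge0 => ? _); exact: sv2_ge0. Qed.

Section SequentialTruncation.
Variable Uh : nat -> tmat C p.
Hypothesis hUh : forall n, (n < N)%N -> exists U S V,
  is_tSVD L (d n) (ncols N (shp d d' n) n) (unfold N (shp d d' n) n (hprod L d A Uh n)) U S V
  /\ (forall i j, (i < d n)%N -> (j < d' n)%N -> Uh n i j = U i j).

Lemma sthosvd_slice_error_le k :
  sqnorm N d (slice L k (fun x => A x - rprod L d' (hprod L d A Uh N) Uh N x)) <=
  \sum_(n < N) unfolding_tail k n.
Proof.
rewrite sliceB (slice_rprod L_unit) (slice_hprod L_unit).
have svd_y n : (n < N)%N -> exists (U : 'M[C]_(d n))
    (S : 'M[C]_(d n, ncols N (shp d d' n) n)) (V : 'M[C]_(ncols N (shp d d' n) n)),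
    [/\ U \is unitarymx, V \is unitarymx, rdiag_sorted S,
      unfoldmx N (shp d d' n) n (d n) (ncols N (shp d d' n) n)
        (hprodS d (slice L k A) (fun m => slicem L k (Uh m)) n) = U *m S *m mxH V &
      fmx (d n) (d' n) (slicem L k (Uh n)) = U *m pid_mx (d' n)].
  move=> hn; have [U [S [V [/(slice_svd k) [hU hV hS hY] hUhU]]]] := hUh hn.
  exists (tslice L (d n) (d n) U k), (tslice L _ _ S k), (tslice L _ _ V k).
  split => //; first by rewrite -(slice_hprod L_unit).
  apply: fmx_slicem_pid => [|i j hj hjr]; first exact: d'_le_d.
  by rewrite tsliceE /slicem hUhU.
have uh_iso n : (n < N)%N ->
    mxH (fmx (d n) (d' n) (slicem L k (Uh n))) *m fmx (d n) (d' n) (slicem L k (Uh n)) = 1%:M.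
  move=> hn; have [U [S [V [hU _ _ _ ->]]]] := svd_y n hn.
  exact: isometry_unitary_mul hU (isometry_pid_mx C (d'_le_d hn)).
exact: sqnorm_sthosvd_error_le uh_iso _ (svd_slice_unfold k) svd_y d'_le_d.
Qed.

End SequentialTruncation.

Lemma slice_tails_le_error (S : ttensor C p) (Wf : nat -> tmat C p) k :
  (forall n, (n < N)%N -> forall i j, (i < d' n)%N -> (j < d' n)%N ->
     tmul L (d n) (tH L (Wf n)) (Wf n) i j = tid L i j) ->
  \sum_(n < N) unfolding_tail k n <= N%:R * sqnorm N d (slice L k (fun x => A x - rprod L d' S Wf N x)).
Proof.
move=> hWf; rewrite mulr_natl -[X in _ *+ X](card_ord N) -sumr_const.
apply: ler_sum => n _; have hn := ltn_ord n.
have [U [V [hU hV hS hY]]] := svd_slice_unfold k hn.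
rewrite sliceB (slice_rprod L_unit).
apply: (sv2_tail_le_sqnorm_error _ hn (d'_le_d hn) hU hV hS hY).
exact: (isometry_slicem L_unit k (hWf n hn)).
Qed.

End TubalHOSVD.

Unset Implicit Arguments.
Local Open Scope complex_scope.

Theorem theorem5p5 (R : realType) (p : nat) (L : 'M[R[i]]_p)
  (c : R[i]) (W : 'M[R[i]]_p)
  (hp : (0 < p)%N) (hc : c != 0) (hW : W \is unitarymx) (hL : L = c *: W)
  (N : nat) (d d' : nat -> nat) (A : ttensor R[i] p)
  (Sig : nat -> tmat R[i] p)
  (hSig : forall n, (n < N)%N -> exists U V,
      is_tSVD L (d n) (ncols N d n) (unfold N d n A) U (Sig n) V)
  (hd' : forall n, (n < N)%N -> (1 <= d' n <= trank (d n) (ncols N d n) (Sig n))%N)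
  (Uh : nat -> tmat R[i] p)
  (hUh : forall n, (n < N)%N -> exists U S V,
      is_tSVD L (d n) (ncols N (shp d d' n) n) (unfold N (shp d d' n) n (hprod L d A Uh n)) U S V
      /\ (forall i j, (i < d n)%N -> (j < d' n)%N -> Uh n i j = U i j)) :
  let Shat := hprod L d A Uh N in
  let Ahat := rprod L d' Shat Uh N in
  let bound := sqrtC (\sum_(n < N)
       \sum_(d' n <= k < trank (d n) (ncols N d n) (Sig n)) tnorm (Sig n k k) ^+ 2) in
  tnormT N d (fun x => A x - Ahat x) <= bound /\
  forall (S : ttensor R[i] p) (Wf : nat -> tmat R[i] p),
    (forall n, (n < N)%N -> forall i j, (i < d' n)%N -> (j < d' n)%N ->
       tmul L (d n) (tH L (Wf n)) (Wf n) i j = tid L i j) ->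
    bound <= sqrtC (N%:R) * tnormT N d (fun x => A x - rprod L d' S Wf N x).
Proof.
move=> Shat Ahat bound.
have c2_ge0 : 0 <= `|c| ^- 2 by rewrite invr_ge0 exprn_ge0.
have err_ge0 X : 0 <= \sum_k sqnorm N d (slice L k X).
  by rewrite sumr_ge0 // => k _; exact: sqnorm_ge0.
have tails_ge0 := sum_tails_ge0 L N d d' Sig.
rewrite /bound (sum_tnorm_tails hc hW hL hSig hd'); split.
  rewrite (tnormT_slices hc hW hL) ler_sqrtC ?nnegrE ?mulr_ge0 //.
  rewrite ler_wpM2l // ler_sum // => k _.
  exact: (sthosvd_slice_error_le hc hW hL hSig hd' hUh).
move=> S Wf hWf; rewrite (tnormT_slices hc hW hL) -sqrtCM ?nnegrE ?mulr_ge0 ?ler0n //.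
rewrite ler_sqrtC ?nnegrE ?mulr_ge0 ?ler0n //.
rewrite mulrCA ler_wpM2l // mulr_sumr ler_sum // => k _.
exact: (slice_tails_le_error hc hW hL hSig hd' S k hWf).
Qed.
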